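(* For $r\in(0,\infty)$ let $F_r$ be the distribution function of the Student $t$ density $$f_r(x)=\frac{\Gamma((r+1)/2)}{\sqrt{\pi r}\,\Gamma(r/2)}\Big(1+\frac{x^2}{r}\Big)^{-(r+1)/2},\quad x\in\mathbb{R}.$$ Then $F_r^{-1/r}$ and $(1-F_r)^{-1/r}$ are convex on $\mathbb{R}$ (i.e. $F_r$ is bi-$s^*$-concave with $s=-1/(1+r)$, $s^*=-1/r$), and $$\gamma(F_r)=\sup_{x\in\mathbb{R}}F_r(x)(1-F_r(x))\frac{|f_r'(x)|}{f_r(x)^2}=1+\frac1r .$$ In particular, $\gamma$ of the Cauchy distribution ($r=1$) equals $2$.
   Context: Bi-$s^*$-concavity for $s\in(-1,0)$, $s^*=s/(1+s)$: both $x\mapsto F(x)^{s^*}$ and $x\mapsto(1-F(x))^{s^*}$ are convex on $\mathbb{R}$. *)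

From Stdlib Require Import Reals.
Open Scope R_scope.

Definition RInt_eq (f : R -> R) (a b v : R) : Prop :=
  exists pr : Riemann_integrable f a b, RiemannInt pr = v.

Definition improper_lower (f : R -> R) (x l : R) : Prop :=
  forall eps, 0 < eps -> exists M, forall a, a < M ->
    exists w, RInt_eq f a x w /\ Rabs (w - l) < eps.

Definition improper_0_inf (f : R -> R) (l : R) : Prop :=
  forall eps, 0 < eps -> exists delta, 0 < delta /\ exists M, forall u v,
    0 < u -> u < delta -> M < v ->
    exists w, RInt_eq f u v w /\ Rabs (w - l) < eps.

Definition is_Gamma (a g : R) : Prop :=
  improper_0_inf (fun t => Rpower t (a - 1) * exp (- t)) g.

(* Student t density with r degrees of freedom, given c = Gamma((r+1)/2) and
   d = Gamma(r/2). *)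
Definition student_density (r c d : R) (x : R) : R :=
  c / (sqrt (PI * r) * d) * Rpower (1 + x ^ 2 / r) (- ((r + 1) / 2)).

Definition is_cdf_of (f F : R -> R) : Prop :=
  forall x, improper_lower f x (F x).

Definition convex_on_R (h : R -> R) : Prop :=
  forall x y t, 0 <= t -> t <= 1 ->
    h (t * x + (1 - t) * y) <= t * h x + (1 - t) * h y.

Definition bi_s_concave (s : R) (F : R -> R) : Prop :=
  let sstar := s / (1 + s) in
  convex_on_R (fun x => Rpower (F x) sstar) /\
  convex_on_R (fun x => Rpower (1 - F x) sstar).

Definition gamma_set (F f df : R -> R) (y : R) : Prop :=
  exists x, y = F x * (1 - F x) * Rabs (df x) / (f x) ^ 2.

From Stdlib Require Import Reals Lra Lia Classical.
From Coquelicot Require Import Coquelicot.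
Open Scope R_scope.

(* With [s = (r + 1) / 2] the density is [f = K (1 + x^2/r)^(-s)] and
   [f' = -(r + 1) x f / (r + x^2)].  For [k < 0], [F^k] is convex as soon as
   [F f' <= (1 - k) f^2].  For [k = -1/r] this is trivial where [f' <= 0], i.e. on [x >= 0];
   on [x < 0] it follows from the tail bound [F <= m] with [m(x) = f(x) (1 + x^2/r) / (-x)],
   because [m f' = (1 + 1/r) f^2] and [m' = f (1 + 1/x^2) >= f].  The symmetry
   [F(-x) = 1 - F(x)] transfers everything to [(1 - F)^(-1/r)] and to [x > 0], which gives
   [gamma(F) <= 1 + 1/r]; the bound is approached as [x -> -oo] since also
   [F >= m x^2 / (1 + x^2)].

   The symmetry needs total mass [1], i.e.
   [2 Gamma(s) int_0^oo (1 + y^2)^(-s) dy = sqrt PI Gamma(s - 1/2)].  The quotient of the two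
   sides is invariant under [s -> s + 1]; log-convexity of [Gamma] and the identity
   [(2t - 1) B(t) B(t + 1/2) = PI / 2] for [B(t) = int_0^oo (1 + y^2)^(-t) dy] (periodic in
   [t] of period [1/2], and squeezed by the monotonicity of [B]) force it to be [1]. *)

(** * Real-analysis preliminaries *)

Lemma RInt_of_RInt_eq f a b v : RInt_eq f a b v -> RInt f a b = v.
Proof. intros [pr <-]. apply RInt_Reals. Qed.

Lemma INR_eventually_gt x : exists N : nat, forall n, (N <= n)%nat -> x < INR n.
Proof.
  destruct (INR_unbounded x) as [N HN]. exists N. intros n Hn.
  apply le_INR in Hn. lra.
Qed.

Lemma eq0_of_linear_bound X a C N0 :
  (forall n, (N0 <= n)%nat -> Rabs X * (a + INR n) <= C) -> X = 0.
Proof.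
  intros H. destruct (Req_dec X 0) as [|HX]; auto. exfalso.
  assert (HX' : 0 < Rabs X) by (apply Rabs_pos_lt; auto).
  destruct (INR_eventually_gt (C / Rabs X - a)) as [N HN].
  set (n := Nat.max N N0).
  specialize (H n (Nat.le_max_r _ _)). specialize (HN n (Nat.le_max_l _ _)).
  assert (HC : C < Rabs X * (a + INR n)).
  { replace C with (Rabs X * (C / Rabs X)) by (field; lra).
    apply Rmult_lt_compat_l; lra. }
  lra.
Qed.

Lemma is_derive_continuity_pt f x l : is_derive f x l -> continuity_pt f x.
Proof.
  intros H. apply is_derive_Reals in H. apply derivable_continuous_pt. now exists l.
Qed.

Lemma ex_derive_continuity_pt f x : ex_derive f x -> continuity_pt f x.
Proof. intros [l Hl]. exact (is_derive_continuity_pt f x l Hl). Qed.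

Lemma ex_RInt_continuity_pt f a b : a <= b ->
  (forall x, a <= x <= b -> continuity_pt f x) -> ex_RInt f a b.
Proof.
  intros Hab Hc. apply (ex_RInt_continuous (V := R_CompleteNormedModule)). intros z Hz.
  rewrite Rmin_left, Rmax_right in Hz by lra. apply continuity_pt_filterlim, Hc, Hz.
Qed.

Lemma ex_RInt_continuity f : (forall x, continuity_pt f x) -> forall a b, ex_RInt f a b.
Proof.
  intros Hc a b. apply (ex_RInt_continuous (V := R_CompleteNormedModule)).
  intros; apply continuity_pt_filterlim, Hc.
Qed.

Lemma RInt_is_derive f df a b : a <= b ->
  (forall x, a <= x <= b -> is_derive f x (df x)) ->
  (forall x, a <= x <= b -> continuity_pt df x) -> RInt df a b = f b - f a.
Proof.
  intros Hab Hd Hc. apply (is_RInt_unique (V := R_CompleteNormedModule)).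
  apply (is_RInt_derive (V := R_CompleteNormedModule) f df a b).
  - rewrite Rmin_left, Rmax_right by lra. exact Hd.
  - rewrite Rmin_left, Rmax_right by lra.
    intros x Hx. apply continuity_pt_filterlim, Hc, Hx.
Qed.

Lemma RInt_lincomb f g al be a b : ex_RInt f a b -> ex_RInt g a b ->
  RInt (fun x => al * f x + be * g x) a b = al * RInt f a b + be * RInt g a b.
Proof.
  intros Hf Hg. apply is_RInt_unique.
  exact (is_RInt_plus _ _ _ _ _ _ (is_RInt_scal _ _ _ al _ (RInt_correct f a b Hf))
                                  (is_RInt_scal _ _ _ be _ (RInt_correct g a b Hg))).
Qed.

Lemma RInt_scal_l f k a b : ex_RInt f a b -> RInt (fun x => k * f x) a b = k * RInt f a b.
Proof.
  intros H. apply is_RInt_unique. exact (is_RInt_scal _ _ _ k _ (RInt_correct f a b H)).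
Qed.

Lemma RInt_split f a b c : ex_RInt f a b -> ex_RInt f b c ->
  RInt f a c = RInt f a b + RInt f b c.
Proof. intros H1 H2. now rewrite <- (RInt_Chasles f a b c H1 H2). Qed.

Lemma sq_le_of_quadratic_nonneg A B C : 0 <= C ->
  (forall l, 0 <= A - 2 * l * B + l ^ 2 * C) -> B ^ 2 <= A * C.
Proof.
  intros HC H. destruct (Rle_lt_or_eq_dec 0 C HC) as [HC'|<-].
  - specialize (H (B / C)).
    replace (A - 2 * (B / C) * B + (B / C) ^ 2 * C) with ((A * C - B ^ 2) / C) in H by (field; lra).
    apply Rmult_le_compat_r with (r := C) in H; [|lra].
    unfold Rdiv in H. rewrite Rmult_assoc, Rinv_l, Rmult_1_r, Rmult_0_l in H; lra.
  - destruct (Req_dec B 0) as [->|HB]; [lra|].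
    specialize (H ((A + 1) / (2 * B))).
    replace (A - 2 * ((A + 1) / (2 * B)) * B + ((A + 1) / (2 * B)) ^ 2 * 0) with (-1) in H
      by (field; auto).
    lra.
Qed.

Lemma RInt_Cauchy_Schwarz p q a b : a <= b ->
  (forall x, a <= x <= b -> continuity_pt p x) ->
  (forall x, a <= x <= b -> continuity_pt q x) ->
  (RInt (fun x => p x * q x) a b) ^ 2 <=
    RInt (fun x => p x * p x) a b * RInt (fun x => q x * q x) a b.
Proof.
  intros Hab Hp Hq.
  assert (Hint : forall g h, (forall x, a <= x <= b -> continuity_pt g x) ->
            (forall x, a <= x <= b -> continuity_pt h x) -> ex_RInt (fun x => g x * h x) a b).
  { intros g h Hg Hh. apply ex_RInt_continuity_pt; auto.
    intros; apply continuity_pt_mult; auto. }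
  apply sq_le_of_quadratic_nonneg.
  - apply RInt_ge_0; auto. intros; nra.
  - intros l.
    set (pl := fun x => p x - l * q x).
    assert (Hpl : forall x, a <= x <= b -> continuity_pt pl x).
    { intros x Hx. apply continuity_pt_minus; auto.
      apply continuity_pt_scal; auto. }
    replace (RInt (fun x => p x * p x) a b - 2 * l * RInt (fun x => p x * q x) a b +
             l ^ 2 * RInt (fun x => q x * q x) a b)
      with (RInt (fun x => pl x * pl x) a b).
    { apply RInt_ge_0; auto. intros; apply Rle_0_sqr. }
    rewrite (RInt_ext (V := R_CompleteNormedModule) (fun x => pl x * pl x)
               (fun x => 1 * (p x * p x) + 1 * ((-2 * l) * (p x * q x) + l ^ 2 * (q x * q x))))
      by (intros x _; unfold pl; simpl; ring).
    rewrite RInt_lincomb, RInt_lincomb by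
      (auto; apply ex_RInt_continuity_pt; auto; intros; apply continuity_pt_plus;
       apply continuity_pt_scal, continuity_pt_mult; auto).
    apply Rminus_diag_uniq; ring.
Qed.

Lemma nondecr_of_derive_nonneg g g' :
  (forall x, is_derive g x (g' x)) -> (forall x, 0 <= g' x) ->
  forall x y, x <= y -> g x <= g y.
Proof.
  intros Hd Hp x y Hxy.
  destruct (MVT_gen g x y g') as [z [_ E]].
  - intros; apply Hd.
  - intros z _. exact (is_derive_continuity_pt _ _ _ (Hd z)).
  - specialize (Hp z). nra.
Qed.

(* Two mean-value steps, on [x, z] and [z, y], compare the chord slopes at the point z. *)
Lemma convex_on_R_of_derive_nondecr h h' :
  (forall x, is_derive h x (h' x)) ->
  (forall x y, x <= y -> h' x <= h' y) -> convex_on_R h.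
Proof.
  intros Hd Hm.
  assert (Hc : forall x, continuity_pt h x)
    by (intros x; exact (is_derive_continuity_pt _ _ _ (Hd x))).
  assert (key : forall x y t, x <= y -> 0 <= t -> t <= 1 ->
            h (t * x + (1 - t) * y) <= t * h x + (1 - t) * h y).
  { intros x y t Hxy H0 H1. set (z := t * x + (1 - t) * y).
    assert (Hz : x <= z <= y) by (unfold z; nra).
    destruct (MVT_gen h x z h') as [c1 [Hc1 E1]]; [intros; apply Hd | intros; apply Hc |].
    destruct (MVT_gen h z y h') as [c2 [Hc2 E2]]; [intros; apply Hd | intros; apply Hc |].
    rewrite Rmin_left, Rmax_right in Hc1, Hc2 by lra.
    assert (Hm12 : h' c1 <= h' c2) by (apply Hm; lra).
    replace (z - x) with ((1 - t) * (y - x)) in E1 by (unfold z; ring).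
    replace (y - z) with (t * (y - x)) in E2 by (unfold z; ring).
    assert (0 <= t * (1 - t) * (y - x) * (h' c2 - h' c1)).
    { apply Rmult_le_pos; [|lra]. apply Rmult_le_pos; [|lra]. nra. }
    nra. }
  intros x y t H0 H1. destruct (Rle_lt_dec x y) as [Hxy|Hxy].
  - apply key; auto.
  - replace (t * x + (1 - t) * y) with ((1 - t) * y + (1 - (1 - t)) * x) by ring.
    replace (t * h x + (1 - t) * h y) with ((1 - t) * h y + (1 - (1 - t)) * h x) by ring.
    apply key; lra.
Qed.

Lemma convex_on_R_ext h1 h2 : (forall x, h1 x = h2 x) -> convex_on_R h1 -> convex_on_R h2.
Proof. intros E H x y t H0 H1. rewrite <- !E. apply H; auto. Qed.

Lemma convex_on_R_comp_opp h : convex_on_R h -> convex_on_R (fun x => h (- x)).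
Proof.
  intros H x y t H0 H1.
  replace (- (t * x + (1 - t) * y)) with (t * (- x) + (1 - t) * (- y)) by ring.
  apply H; auto.
Qed.

(* [(G^k)'' = k G^(k-2) ((k-1) G'^2 + G G'')], which is [>= 0] for [k < 0] exactly under the
   stated inequality. *)
Lemma convex_on_R_Rpower_neg G g dg k : k < 0 -> (forall x, 0 < G x) ->
  (forall x, is_derive G x (g x)) -> (forall x, is_derive g x (dg x)) ->
  (forall x, G x * dg x <= (1 - k) * g x ^ 2) ->
  convex_on_R (fun x => Rpower (G x) k).
Proof.
  intros Hk HG HdG Hdg Hineq.
  assert (DG : forall x, Derive G x = g x) by (intros; apply is_derive_unique, HdG).
  assert (Dg : forall x, Derive g x = dg x) by (intros; apply is_derive_unique, Hdg).
  apply convex_on_R_of_derive_nondecr with (h' := fun x => k * exp (k * ln (G x)) * g x / G x).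
  - intros x. unfold Rpower. auto_derive.
    + split; [eexists; apply HdG | split; auto].
    + rewrite DG. field. apply Rgt_not_eq, HG.
  - apply nondecr_of_derive_nonneg with
      (g' := fun x => k * exp (k * ln (G x)) / G x ^ 2 * ((k - 1) * g x ^ 2 + G x * dg x)).
    + intros x. auto_derive.
      * repeat split; try (eexists; first [apply HdG | apply Hdg]); auto; apply Rgt_not_eq, HG.
      * rewrite DG, Dg. field. apply Rgt_not_eq, HG.
    + intros x. specialize (Hineq x). pose proof (HG x).
      assert (0 < exp (k * ln (G x)) / G x ^ 2) by (apply Rdiv_lt_0_compat; [apply exp_pos | nra]).
      replace (k * exp (k * ln (G x)) / G x ^ 2 * ((k - 1) * g x ^ 2 + G x * dg x))
        with ((- k) * (exp (k * ln (G x)) / G x ^ 2) * ((1 - k) * g x ^ 2 - G x * dg x))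
        by (field; lra).
      apply Rmult_le_pos; [apply Rmult_le_pos|]; lra.
Qed.

Lemma is_lim_p_infty_of_nondecr_bounded g B :
  (forall x y, 0 <= x <= y -> g x <= g y) -> (forall x, 0 <= x -> g x <= B) ->
  exists l : R, is_lim g p_infty l.
Proof.
  intros Hm Hb.
  set (E := fun z => exists x, 0 <= x /\ z = g x).
  assert (HE : bound E) by (exists B; intros z [x [Hx ->]]; auto).
  assert (HE2 : exists z, E z) by (exists (g 0), 0; split; [lra|auto]).
  destruct (completeness E HE HE2) as [l [Hub Hlub]].
  exists l. apply is_lim_spec. intros eps.
  assert (Hx0 : exists x0, 0 <= x0 /\ l - eps < g x0).
  { apply NNPP. intros Hn. assert (is_upper_bound E (l - eps)).
    { intros z [x [Hx ->]]. apply Rnot_lt_le. intros Hc. apply Hn. now exists x. }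
    specialize (Hlub _ H). pose proof (cond_pos eps). lra. }
  destruct Hx0 as [x0 [Hx0 Hgx0]].
  exists x0. intros x Hx. assert (g x <= l) by (apply Hub; exists x; split; auto; lra).
  assert (g x0 <= g x) by (apply Hm; lra).
  apply Rabs_def1; lra.
Qed.

Lemma RInt_even f x : (forall x, continuity_pt f x) -> (forall y, f (- y) = f y) ->
  RInt f 0 (- x) = - RInt f 0 x.
Proof.
  intros Hc He.
  assert (H := RInt_comp_lin (V := R_CompleteNormedModule) f (-1) 0 0 x).
  replace (-1 * 0 + 0) with 0 in H by ring. replace (-1 * x + 0) with (- x) in H by ring.
  rewrite <- H by apply ex_RInt_continuity, Hc.
  rewrite (RInt_ext (V := R_CompleteNormedModule) _ (fun y => -1 * f y)).
  - rewrite RInt_scal_l by apply ex_RInt_continuity, Hc. apply Rminus_diag_uniq; ring.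
  - intros y _. unfold scal; simpl; unfold mult; simpl.
    replace (-1 * y + 0) with (- y) by ring. now rewrite He.
Qed.

Lemma is_lim_Rpower_neg e : 0 < e -> is_lim (fun y => Rpower y (- e)) p_infty 0.
Proof.
  intros He. unfold Rpower.
  apply (is_lim_comp exp (fun y => - e * ln y) p_infty 0 m_infty).
  - apply is_lim_exp_m.
  - assert (E : Rbar_mult (- e) p_infty = m_infty).
    { unfold Rbar_mult, Rbar_mult'. destruct (Rle_dec 0 (- e)); [exfalso; lra | reflexivity]. }
    rewrite <- E. apply is_lim_scal_l, is_lim_ln_p.
  - exists 0. intros; discriminate.
Qed.

Lemma is_lim_seq_INR_plus a : is_lim_seq (fun n => INR n + a) p_infty.
Proof.
  apply (is_lim_seq_plus _ _ p_infty a p_infty).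
  - apply is_lim_seq_INR.
  - apply is_lim_seq_const.
  - reflexivity.
Qed.

Lemma is_lim_inv_p_infty : is_lim (fun b => / b) p_infty 0.
Proof.
  replace (Finite 0) with (Rbar_inv p_infty) by reflexivity.
  apply is_lim_inv; [apply is_lim_id | discriminate].
Qed.

Lemma exp_le_exp x y : x <= y -> exp x <= exp y.
Proof. intros [H|<-]; [apply Rlt_le, exp_increasing, H | apply Rle_refl]. Qed.

Lemma is_lub_iff (E E' : R -> Prop) l : (forall y, E y <-> E' y) -> is_lub E l -> is_lub E' l.
Proof.
  intros HE [Hub Hl]. split.
  - intros y Hy. apply Hub, HE, Hy.
  - intros b Hb. apply Hl. intros y Hy. apply Hb, HE, Hy.
Qed.

(** * The Gamma function *)

Definition gamma_kernel (a t : R) : R := Rpower t (a - 1) * exp (- t).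

Definition Gamma_trunc (a : R) (n : nat) : R :=
  RInt (gamma_kernel a) (/ (INR n + 1)) (INR n + 1).

Definition Gamma_lim (a g : R) : Prop := is_lim_seq (Gamma_trunc a) g.

Lemma Gamma_trunc_bounds n : 0 < / (INR n + 1) <= INR n + 1.
Proof.
  pose proof (pos_INR n). split; [apply Rinv_0_lt_compat; lra|].
  apply Rle_trans with 1; [|lra]. rewrite <- Rinv_1. apply Rinv_le_contravar; lra.
Qed.

Lemma gamma_kernel_pos a t : 0 < gamma_kernel a t.
Proof. apply Rmult_lt_0_compat; apply exp_pos. Qed.

Lemma gamma_kernel_continuity_pt a t : 0 < t -> continuity_pt (gamma_kernel a) t.
Proof. intros Ht. apply ex_derive_continuity_pt. unfold gamma_kernel, Rpower. auto_derive. lra. Qed.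

Lemma ex_RInt_gamma_kernel a u v : 0 < u -> u <= v -> ex_RInt (gamma_kernel a) u v.
Proof.
  intros Hu Huv. apply ex_RInt_continuity_pt; auto.
  intros; apply gamma_kernel_continuity_pt; lra.
Qed.

Lemma is_Gamma_lim a g : is_Gamma a g -> Gamma_lim a g.
Proof.
  intros H. apply is_lim_seq_spec. intros eps.
  destruct (H eps (cond_pos eps)) as [del [Hdel [M HM]]].
  destruct (INR_eventually_gt (Rmax M (/ del))) as [N HN]. exists N. intros n Hn.
  specialize (HN n Hn). pose proof (pos_INR n).
  pose proof (Rmax_l M (/ del)). pose proof (Rmax_r M (/ del)).
  assert (Hlo : / (INR n + 1) < del).
  { rewrite <- (Rinv_inv del). apply Rinv_lt_contravar; [|lra].
    apply Rmult_lt_0_compat; [apply Rinv_0_lt_compat|]; lra. }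
  destruct (HM _ (INR n + 1) (proj1 (Gamma_trunc_bounds n)) Hlo ltac:(lra)) as [w [Hw Hwe]].
  unfold Gamma_trunc, gamma_kernel. now rewrite (RInt_of_RInt_eq _ _ _ _ Hw).
Qed.

(* Integration by parts, with [t^a e^(-t)] as the boundary term. *)
Lemma RInt_gamma_kernel_succ a u v : 0 < u -> u <= v ->
  RInt (gamma_kernel (a + 1)) u v =
    (Rpower u a * exp (- u) - Rpower v a * exp (- v)) + a * RInt (gamma_kernel a) u v.
Proof.
  intros Hu Huv.
  assert (E : RInt (fun t => gamma_kernel (a + 1) t - a * gamma_kernel a t) u v
              = - (Rpower v a * exp (- v)) - - (Rpower u a * exp (- u))).
  { apply (RInt_is_derive (fun t => - (Rpower t a * exp (- t)))); auto.
    - intros t Ht. unfold gamma_kernel, Rpower. auto_derive; [lra|].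
      replace (a + 1 - 1) with a by ring.
      replace (exp ((a - 1) * ln t)) with (exp (a * ln t) * exp (- ln t))
        by (rewrite <- exp_plus; f_equal; ring).
      rewrite (exp_Ropp (ln t)), exp_ln by lra. field. lra.
    - intros t Ht. apply continuity_pt_minus; [|apply continuity_pt_scal];
        apply gamma_kernel_continuity_pt; lra. }
  rewrite (RInt_ext (V := R_CompleteNormedModule) (gamma_kernel (a + 1))
             (fun t => 1 * (gamma_kernel (a + 1) t - a * gamma_kernel a t) + a * gamma_kernel a t))
    by (intros; simpl; ring).
  rewrite RInt_lincomb, E.
  - apply Rminus_diag_uniq; ring.
  - apply ex_RInt_continuity_pt; auto. intros t Ht.
    apply continuity_pt_minus; [|apply continuity_pt_scal]; apply gamma_kernel_continuity_pt; lra.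
  - apply ex_RInt_gamma_kernel; auto.
Qed.

Lemma is_lim_seq_gamma_boundary_lo a : 0 < a ->
  is_lim_seq (fun n => Rpower (/ (INR n + 1)) a * exp (- / (INR n + 1))) 0.
Proof.
  intros Ha.
  apply is_lim_seq_le_le with (u := fun _ => 0) (w := fun n => Rpower (INR n + 1) (- a)).
  - intros n. pose proof (Gamma_trunc_bounds n) as [H0 H1]. pose proof (pos_INR n).
    assert (E : Rpower (/ (INR n + 1)) a = Rpower (INR n + 1) (- a)).
    { unfold Rpower. rewrite ln_Rinv by lra. f_equal. ring. }
    rewrite E. assert (Hexp : exp (- / (INR n + 1)) < exp 0) by (apply exp_increasing; lra).
    rewrite exp_0 in Hexp.
    assert (0 < Rpower (INR n + 1) (- a)) by apply exp_pos.
    split; [apply Rlt_le, Rmult_lt_0_compat; [lra | apply exp_pos] | nra].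
  - apply is_lim_seq_const.
  - apply (is_lim_comp_seq (fun y => Rpower y (- a)) (fun n => INR n + 1) p_infty 0).
    + apply is_lim_Rpower_neg, Ha.
    + exists 0%nat; intros; discriminate.
    + apply is_lim_seq_INR_plus.
Qed.

Lemma is_lim_Rpower_mul_exp_opp a : is_lim (fun v => Rpower v a * exp (- v)) p_infty 0.
Proof.
  apply (is_lim_ext_loc (fun v => exp (v * (a * (ln v / v) - 1)))).
  { exists 0. intros v Hv. unfold Rpower. rewrite <- exp_plus. f_equal. field. lra. }
  apply (is_lim_comp exp _ p_infty 0 m_infty); [apply is_lim_exp_m| |].
  - replace m_infty with (Rbar_mult p_infty (a * 0 - 1))
      by (simpl; destruct Rle_dec; [exfalso; lra | reflexivity]).
    apply is_lim_mult; [apply is_lim_id | | simpl; lra].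
    apply (is_lim_minus' _ _ _ (a * 0) 1); [|apply is_lim_const].
    exact (is_lim_scal_l _ a p_infty 0 is_lim_div_ln_p).
  - exists 0; intros; discriminate.
Qed.

Lemma Gamma_lim_succ a g : 0 < a -> Gamma_lim a g -> Gamma_lim (a + 1) (a * g).
Proof.
  intros Ha H. unfold Gamma_lim.
  apply is_lim_seq_ext with (u := fun n =>
    (Rpower (/ (INR n + 1)) a * exp (- / (INR n + 1)) - Rpower (INR n + 1) a * exp (- (INR n + 1)))
      + a * Gamma_trunc a n).
  { intros n. unfold Gamma_trunc. pose proof (Gamma_trunc_bounds n).
    rewrite RInt_gamma_kernel_succ; auto; lra. }
  replace (a * g) with ((0 - 0) + a * g) by ring.
  apply is_lim_seq_plus'; [apply is_lim_seq_minus'|apply (is_lim_seq_scal_l _ a g), H].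
  - apply is_lim_seq_gamma_boundary_lo, Ha.
  - apply (is_lim_comp_seq (fun v => Rpower v a * exp (- v)) (fun n => INR n + 1) p_infty 0).
    + apply is_lim_Rpower_mul_exp_opp.
    + exists 0%nat; intros; discriminate.
    + apply is_lim_seq_INR_plus.
Qed.

Definition half_gamma_kernel (a t : R) : R := Rpower t ((a - 1) / 2) * exp (- t / 2).

Lemma half_gamma_kernel_mul a b t :
  half_gamma_kernel a t * half_gamma_kernel b t = gamma_kernel ((a + b) / 2) t.
Proof.
  unfold half_gamma_kernel, gamma_kernel.
  replace (Rpower t ((a - 1) / 2) * exp (- t / 2) * (Rpower t ((b - 1) / 2) * exp (- t / 2)))
    with ((Rpower t ((a - 1) / 2) * Rpower t ((b - 1) / 2)) * (exp (- t / 2) * exp (- t / 2)))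
    by ring.
  rewrite <- Rpower_plus, <- exp_plus. f_equal; f_equal; field.
Qed.

(* Cauchy-Schwarz on each truncation. *)
Lemma Gamma_lim_midpoint x y gx gy gm :
  Gamma_lim x gx -> Gamma_lim y gy -> Gamma_lim ((x + y) / 2) gm -> gm ^ 2 <= gx * gy.
Proof.
  intros Hx Hy Hm.
  assert (Hsq : forall a t, half_gamma_kernel a t * half_gamma_kernel a t = gamma_kernel a t).
  { intros a t. rewrite half_gamma_kernel_mul. f_equal. field. }
  assert (Hc : forall a t, 0 < t -> continuity_pt (half_gamma_kernel a) t).
  { intros a t Ht. apply ex_derive_continuity_pt. unfold half_gamma_kernel, Rpower.
    auto_derive. exact Ht. }
  assert (HI : forall n, Gamma_trunc ((x + y) / 2) n * Gamma_trunc ((x + y) / 2) n <=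
                         Gamma_trunc x n * Gamma_trunc y n).
  { intros n. pose proof (Gamma_trunc_bounds n). unfold Gamma_trunc.
    rewrite (RInt_ext (gamma_kernel ((x + y) / 2))
               (fun t => half_gamma_kernel x t * half_gamma_kernel y t))
      by (intros; symmetry; apply half_gamma_kernel_mul).
    rewrite (RInt_ext (gamma_kernel x) (fun t => half_gamma_kernel x t * half_gamma_kernel x t))
      by (intros; symmetry; apply Hsq).
    rewrite (RInt_ext (gamma_kernel y) (fun t => half_gamma_kernel y t * half_gamma_kernel y t))
      by (intros; symmetry; apply Hsq).
    match goal with |- ?A * ?A <= _ => replace (A * A) with (A ^ 2) by ring end.
    apply RInt_Cauchy_Schwarz; [lra | |]; intros; apply Hc; lra. }
  assert (L := is_lim_seq_le _ _ _ _ HI (is_lim_seq_mult' _ _ _ _ Hm Hm)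
                 (is_lim_seq_mult' _ _ _ _ Hx Hy)).
  simpl in L. simpl. lra.
Qed.

Lemma Gamma_trunc_nondecr a n : Gamma_trunc a n <= Gamma_trunc a (S n).
Proof.
  unfold Gamma_trunc. rewrite S_INR.
  pose proof (pos_INR n). set (v := INR n + 1). set (u := / v).
  assert (Hu : 0 < u) by (unfold u; apply Rinv_0_lt_compat; unfold v; lra).
  assert (Huv : u <= v) by (apply Gamma_trunc_bounds).
  set (u' := / (v + 1)).
  assert (Hu' : 0 < u' <= u) by
    (unfold u', u; split; [apply Rinv_0_lt_compat | apply Rinv_le_contravar]; unfold v; lra).
  rewrite (RInt_split _ u' u (v + 1)), (RInt_split _ u v (v + 1))
    by (apply ex_RInt_gamma_kernel; lra).
  assert (Hge : forall x y, 0 < x <= y -> 0 <= RInt (gamma_kernel a) x y).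
  { intros x y Hxy. apply RInt_ge_0; [lra | apply ex_RInt_gamma_kernel; lra |].
    intros; apply Rlt_le, gamma_kernel_pos. }
  pose proof (Hge u' u Hu'). pose proof (Hge v (v + 1) ltac:(lra)). lra.
Qed.

Lemma Gamma_lim_pos a g : Gamma_lim a g -> 0 < g.
Proof.
  intros H.
  assert (Hle := is_lim_seq_incr_compare _ _ H (Gamma_trunc_nondecr a) 1%nat).
  assert (0 < Gamma_trunc a 1); [|lra].
  apply RInt_gt_0; simpl; [lra | intros; apply gamma_kernel_pos |].
  intros t Ht. apply continuity_pt_filterlim, gamma_kernel_continuity_pt. lra.
Qed.

Fixpoint Gamma_shift (a g : R) (n : nat) : R :=
  match n with O => g | S n => (a + INR n) * Gamma_shift a g n end.

Lemma Gamma_lim_shift a g n : 0 < a -> Gamma_lim a g -> Gamma_lim (a + INR n) (Gamma_shift a g n).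
Proof.
  intros Ha H. induction n as [|n IH]; simpl Gamma_shift.
  - now rewrite Rplus_0_r.
  - rewrite S_INR, <- Rplus_assoc. apply Gamma_lim_succ; [pose proof (pos_INR n); lra | exact IH].
Qed.

(** * The integral of [(1 + y^2)^(-s)] *)

Definition beta_kernel (s y : R) : R := Rpower (1 + y ^ 2) (- s).

(* [half_beta s = int_0^oo (1 + y^2)^(-s) dy], which is [B(1/2, s - 1/2) / 2]; it is only
   meaningful for [s > 1/2], where the limit exists. *)
Definition half_beta (s : R) : R := real (Lim (fun b => RInt (beta_kernel s) 0 b) p_infty).

Lemma beta_kernel_pos s y : 0 < beta_kernel s y.
Proof. apply exp_pos. Qed.

Lemma beta_kernel_continuity_pt s y : continuity_pt (beta_kernel s) y.
Proof. apply ex_derive_continuity_pt. unfold beta_kernel, Rpower. auto_derive. nra. Qed.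

Lemma ex_RInt_beta_kernel s a b : ex_RInt (beta_kernel s) a b.
Proof. apply ex_RInt_continuity. intros; apply beta_kernel_continuity_pt. Qed.

Lemma beta_kernel_succ s y : beta_kernel (s + 1) y = beta_kernel s y / (1 + y ^ 2).
Proof.
  unfold beta_kernel. replace (- (s + 1)) with (- s + - (1)) by ring.
  rewrite Rpower_plus, (Rpower_Ropp _ 1), Rpower_1 by nra. reflexivity.
Qed.

Lemma beta_kernel_antitone s t y : s <= t -> beta_kernel t y <= beta_kernel s y.
Proof. intros. apply Rle_Rpower; nra. Qed.

(* From [(1 + y)^2 <= 2 (1 + y^2)]. *)
Lemma beta_kernel_le s y : 0 <= s -> 0 <= y ->
  beta_kernel s y <= Rpower 2 s * Rpower (1 + y) (- (2 * s)).
Proof.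
  intros Hs Hy. unfold beta_kernel, Rpower. rewrite <- exp_plus. apply exp_le_exp.
  assert (h : ln ((1 + y) * (1 + y)) <= ln (2 * (1 + y ^ 2))).
  { pose proof (Rle_0_sqr (y - 1)). unfold Rsqr in *. apply ln_le; simpl; nra. }
  rewrite !ln_mult in h by nra.
  assert (0 <= s * (ln 2 + ln (1 + y ^ 2) - (ln (1 + y) + ln (1 + y))))
    by (apply Rmult_le_pos; lra).
  lra.
Qed.

Lemma RInt_beta_kernel_le s b : 1 / 2 < s -> 0 <= b ->
  RInt (beta_kernel s) 0 b <= Rpower 2 s / (2 * s - 1).
Proof.
  intros Hs Hb.
  set (k := fun y => Rpower 2 s * Rpower (1 + y) (- (2 * s))).
  set (K := fun y => - (Rpower 2 s * Rpower (1 + y) (1 - 2 * s)) / (2 * s - 1)).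
  assert (Hk : forall y, -1 < y -> is_derive K y (k y)).
  { intros y Hy. unfold K, k, Rpower. auto_derive; [lra|].
    replace (exp ((1 - 2 * s) * ln (1 + y))) with (exp (- (2 * s) * ln (1 + y)) * exp (ln (1 + y)))
      by (rewrite <- exp_plus; f_equal; ring).
    rewrite exp_ln by lra. field. lra. }
  assert (Hkc : forall y, -1 < y -> continuity_pt k y)
    by (intros y Hy; apply ex_derive_continuity_pt; unfold k, Rpower; auto_derive; lra).
  assert (Hle : RInt (beta_kernel s) 0 b <= RInt k 0 b).
  { apply RInt_le; auto.
    - apply ex_RInt_beta_kernel.
    - apply ex_RInt_continuity_pt; auto. intros; apply Hkc; lra.
    - intros; apply beta_kernel_le; lra. }
  rewrite (RInt_is_derive K k) in Hle; [| lra | intros; apply Hk; lra | intros; apply Hkc; lra].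
  unfold K in Hle. replace (Rpower (1 + 0) (1 - 2 * s)) with 1 in Hle
    by (unfold Rpower; rewrite Rplus_0_r, ln_1, Rmult_0_r; symmetry; apply exp_0).
  assert (0 <= Rpower 2 s * Rpower (1 + b) (1 - 2 * s) / (2 * s - 1)).
  { apply Rlt_le, Rdiv_lt_0_compat; [apply Rmult_lt_0_compat; apply exp_pos | lra]. }
  unfold Rdiv in *. lra.
Qed.

Lemma RInt_beta_kernel_nondecr s a b : 0 <= a <= b ->
  RInt (beta_kernel s) 0 a <= RInt (beta_kernel s) 0 b.
Proof.
  intros H. rewrite (RInt_split _ 0 a b) by apply ex_RInt_beta_kernel.
  assert (0 <= RInt (beta_kernel s) a b); [|lra].
  apply RInt_ge_0; [lra | apply ex_RInt_beta_kernel | intros; apply Rlt_le, beta_kernel_pos].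
Qed.

Lemma is_lim_half_beta s : 1 / 2 < s ->
  is_lim (fun b => RInt (beta_kernel s) 0 b) p_infty (half_beta s).
Proof.
  intros Hs.
  destruct (is_lim_p_infty_of_nondecr_bounded (fun b => RInt (beta_kernel s) 0 b)
              (Rpower 2 s / (2 * s - 1))) as [l Hl].
  - intros; apply RInt_beta_kernel_nondecr; auto.
  - intros; apply RInt_beta_kernel_le; auto.
  - unfold half_beta. now rewrite (is_lim_unique _ _ _ Hl).
Qed.

Lemma half_beta_eq s (l : R) :
  is_lim (fun b => RInt (beta_kernel s) 0 b) p_infty l -> half_beta s = l.
Proof. intros H. unfold half_beta. now rewrite (is_lim_unique _ _ _ H). Qed.

Lemma half_beta_antitone s t : 1 / 2 < s -> s <= t -> half_beta t <= half_beta s.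
Proof.
  intros Hs Hst.
  refine (is_lim_le_loc (fun b => RInt (beta_kernel t) 0 b) (fun b => RInt (beta_kernel s) 0 b)
            p_infty (half_beta t) (half_beta s) _ (is_lim_half_beta t ltac:(lra))
            (is_lim_half_beta s Hs)).
  exists 0. intros b Hb.
  apply RInt_le; [lra | apply ex_RInt_beta_kernel | apply ex_RInt_beta_kernel |].
  intros; apply beta_kernel_antitone; auto.
Qed.

Lemma half_beta_pos s : 1 / 2 < s -> 0 < half_beta s.
Proof.
  intros Hs.
  assert (H1 : 0 < RInt (beta_kernel s) 0 1).
  { apply RInt_gt_0; [lra | intros; apply beta_kernel_pos |].
    intros; apply continuity_pt_filterlim, beta_kernel_continuity_pt. }
  assert (RInt (beta_kernel s) 0 1 <= half_beta s); [|lra].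
  refine (is_lim_le_loc (fun _ => RInt (beta_kernel s) 0 1) (fun b => RInt (beta_kernel s) 0 b)
            p_infty _ _ _ (is_lim_const _ _) (is_lim_half_beta s Hs)).
  exists 1. intros b Hb. apply RInt_beta_kernel_nondecr. lra.
Qed.

(* Integration by parts: [(y k_s(y))' = (1 - 2s) k_s(y) + 2s k_(s+1)(y)], and the boundary
   term [b k_s(b) <= b^(1-2s)] vanishes at infinity. *)
Lemma half_beta_succ s : 1 / 2 < s -> half_beta (s + 1) = (2 * s - 1) / (2 * s) * half_beta s.
Proof.
  intros Hs. apply half_beta_eq.
  set (D := fun y => y * beta_kernel s y).
  set (dD := fun y => (1 - 2 * s) * beta_kernel s y + 2 * s * beta_kernel (s + 1) y).
  assert (HD : forall y, is_derive D y (dD y)).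
  { intros y. unfold D, dD. rewrite beta_kernel_succ. unfold beta_kernel, Rpower.
    auto_derive; [nra|]. replace (1 + y * (y * 1)) with (1 + y ^ 2) by ring. field. nra. }
  assert (HdD : forall y, continuity_pt dD y).
  { intros y. unfold dD. apply continuity_pt_plus; apply continuity_pt_scal;
      apply beta_kernel_continuity_pt. }
  apply is_lim_ext_loc with
    (f := fun b => / (2 * s) * D b + (2 * s - 1) / (2 * s) * RInt (beta_kernel s) 0 b).
  { exists 0. intros b Hb.
    rewrite (RInt_ext (V := R_CompleteNormedModule) (beta_kernel (s + 1))
               (fun y => / (2 * s) * dD y + (2 * s - 1) / (2 * s) * beta_kernel s y))
      by (intros; apply Rminus_diag_uniq; unfold dD; field; lra).
    rewrite RInt_lincomb, (RInt_is_derive D dD); auto; try lra.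
    - apply Rminus_diag_uniq. unfold D. ring.
    - apply ex_RInt_continuity_pt; auto; lra.
    - apply ex_RInt_beta_kernel. }
  replace (Finite ((2 * s - 1) / (2 * s) * half_beta s))
    with (Finite (/ (2 * s) * 0 + (2 * s - 1) / (2 * s) * half_beta s)) by (f_equal; ring).
  apply is_lim_plus'; [apply (is_lim_scal_l D (/ (2 * s)) p_infty 0) |
                       apply (is_lim_scal_l _ _ p_infty (half_beta s)), is_lim_half_beta, Hs].
  apply (is_lim_le_le_loc (fun _ => 0) (fun b => Rpower b (- (2 * s - 1))));
    [| apply is_lim_const | apply is_lim_Rpower_neg; lra].
  exists 0. intros b Hb. unfold D. split.
  - apply Rlt_le, Rmult_lt_0_compat; [lra | apply beta_kernel_pos].
  - unfold beta_kernel, Rpower. rewrite <- (exp_ln b) at 1 by lra.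
    rewrite <- exp_plus. apply exp_le_exp.
    assert (ln (b * b) <= ln (1 + b ^ 2)) by (apply ln_le; nra).
    rewrite ln_mult in H by lra. nra.
Qed.

Lemma half_beta_1 : half_beta 1 = PI / 2.
Proof.
  apply half_beta_eq.
  apply is_lim_ext_loc with (f := fun b => PI / 2 - atan (/ b)).
  { exists 0. intros b Hb. rewrite atan_inv by lra.
    rewrite (RInt_is_derive atan); [rewrite atan_0; ring | lra | |].
    - intros x _. apply is_derive_Reals.
      replace (beta_kernel 1 x) with (/ (1 + x ^ 2)) by
        (unfold beta_kernel; rewrite Rpower_Ropp, Rpower_1 by nra; reflexivity).
      apply derivable_pt_lim_atan.
    - intros; apply beta_kernel_continuity_pt. }
  replace (Finite (PI / 2)) with (Finite (PI / 2 - atan 0)) by (rewrite atan_0; f_equal; ring).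
  apply is_lim_minus'; [apply is_lim_const|].
  apply (is_lim_comp atan (fun b => / b) p_infty (atan 0) 0).
  - apply is_lim_continuity, (is_derive_continuity_pt atan 0 (/ (1 + 0 ^ 2))), is_derive_Reals.
    apply derivable_pt_lim_atan.
  - apply is_lim_inv_p_infty.
  - exists 0. intros y Hy Hc. injection Hc. apply Rinv_neq_0_compat. lra.
Qed.

(* The antiderivative of [(1 + y^2)^(-3/2)] is [y / sqrt (1 + y^2)]. *)
Lemma half_beta_3_2 : half_beta (3 / 2) = 1.
Proof.
  apply half_beta_eq.
  set (A := fun y => y * beta_kernel (1 / 2) y).
  assert (HA : forall y, is_derive A y (beta_kernel (3 / 2) y)).
  { intros y. replace (3 / 2) with (1 / 2 + 1) by field. rewrite beta_kernel_succ.
    unfold A, beta_kernel, Rpower. auto_derive; [nra|].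
    replace (1 + y * (y * 1)) with (1 + y ^ 2) by ring. field. nra. }
  assert (HA0 : A 0 = 0) by (unfold A; ring).
  apply is_lim_ext_loc with (f := A).
  { exists 0. intros b Hb. rewrite (RInt_is_derive A); [ring [HA0] | lra | intros; apply HA |].
    intros; apply beta_kernel_continuity_pt. }
  apply (is_lim_le_le_loc (fun b => 1 - / b) (fun _ => 1));
    [| replace (Finite 1) with (Finite (1 - 0)) by (f_equal; ring);
       apply is_lim_minus'; [apply is_lim_const | apply is_lim_inv_p_infty]
     | apply is_lim_const].
  exists 1. intros b Hb. unfold A.
  assert (HS : beta_kernel (1 / 2) b = / sqrt (1 + b ^ 2)).
  { unfold beta_kernel. rewrite Rpower_Ropp. f_equal.
    replace (1 / 2) with (/ 2) by field. apply Rpower_sqrt. nra. }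
  rewrite HS. set (S := sqrt (1 + b ^ 2)).
  assert (HS2 : S * S = 1 + b ^ 2) by (apply sqrt_sqrt; nra).
  assert (HS0 : 0 < S) by (apply sqrt_lt_R0; nra).
  assert (Hc0 : 0 < / b <= 1)
    by (split; [apply Rinv_0_lt_compat | rewrite <- Rinv_1; apply Rinv_le_contravar]; lra).
  assert (Hbc : b * / b = 1) by (field; lra).
  assert (HSb : b <= S) by nra.
  assert (HSu : S <= b + / b) by nra.
  split; apply Rmult_le_reg_r with S; auto; rewrite Rmult_assoc, Rinv_l, Rmult_1_r by lra; nra.
Qed.

(** * The Wallis identity and the normalizing constant *)

Definition wallis (t : R) : R := (2 * t - 1) * half_beta t * half_beta (t + 1 / 2).

Lemma wallis_shift t : 1 / 2 < t -> wallis (t + 1 / 2) = wallis t.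
Proof.
  intros Ht. unfold wallis. replace (t + 1 / 2 + 1 / 2) with (t + 1) by field.
  rewrite half_beta_succ by exact Ht. field. lra.
Qed.

Lemma wallis_shift_nat t m : 1 / 2 < t -> wallis (t + INR m / 2) = wallis t.
Proof.
  intros Ht. induction m as [|m IH].
  - simpl. f_equal. field.
  - rewrite S_INR. replace (t + (INR m + 1) / 2) with (t + INR m / 2 + 1 / 2) by field.
    rewrite wallis_shift; [exact IH | pose proof (pos_INR m); lra].
Qed.

Lemma wallis_half_nat k : (2 <= k)%nat -> wallis (INR k / 2) = PI / 2.
Proof.
  intros Hk. replace (INR k / 2) with (1 + INR (k - 2) / 2)
    by (rewrite minus_INR by exact Hk; simpl; field).
  rewrite wallis_shift_nat by lra. unfold wallis. replace (1 + 1 / 2) with (3 / 2) by field.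
  rewrite half_beta_1, half_beta_3_2. field.
Qed.

(* [half_beta] is antitone, so on [k/2 <= T <= (k+1)/2] the product is squeezed between its
   values at consecutive half-integers, where it is known exactly. *)
Lemma wallis_near_half_nat k T : (2 <= k)%nat -> INR k / 2 <= T <= (INR k + 1) / 2 ->
  Rabs (wallis T - PI / 2) * (INR k - 1) <= PI / 2.
Proof.
  intros Hk HT. assert (Hk2 : 2 <= INR k) by (apply le_INR in Hk; exact Hk).
  assert (Y1 := wallis_half_nat k Hk). assert (Z1 := wallis_half_nat (S k) ltac:(lia)).
  unfold wallis in *. rewrite S_INR in Z1.
  replace ((INR k + 1) / 2 + 1 / 2) with (INR k / 2 + 1) in Z1 by field.
  set (Y := half_beta (INR k / 2) * half_beta (INR k / 2 + 1 / 2)) in *.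
  set (Z := half_beta ((INR k + 1) / 2) * half_beta (INR k / 2 + 1)) in *.
  set (X := half_beta T * half_beta (T + 1 / 2)).
  assert (HY : (INR k - 1) * Y = PI / 2) by (rewrite <- Y1; unfold Y; field).
  assert (HZ : INR k * Z = PI / 2) by (rewrite <- Z1; unfold Z; field).
  assert (HXY : X <= Y).
  { apply Rmult_le_compat; try (apply Rlt_le, half_beta_pos; lra);
      apply half_beta_antitone; lra. }
  assert (HZX : Z <= X).
  { apply Rmult_le_compat; try (apply Rlt_le, half_beta_pos; lra);
      apply half_beta_antitone; lra. }
  assert (HZ0 : 0 < Z) by (apply Rmult_lt_0_compat; apply half_beta_pos; lra).
  replace ((2 * T - 1) * half_beta T * half_beta (T + 1 / 2)) with ((2 * T - 1) * X)
    by (unfold X; ring).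
  assert (Hup : (2 * T - 1) * X <= INR k * Y) by (apply Rmult_le_compat; lra).
  assert (Hlo : (INR k - 1) * Z <= (2 * T - 1) * X) by (apply Rmult_le_compat; lra).
  pose proof PI_RGT_0.
  unfold Rabs. destruct Rcase_abs.
  - assert (PI / 2 - (2 * T - 1) * X <= Z) by lra.
    apply Rle_trans with (Z * (INR k - 1)); [apply Rmult_le_compat_r|]; lra.
  - assert ((2 * T - 1) * X - PI / 2 <= Y) by lra.
    apply Rle_trans with (Y * (INR k - 1)); [apply Rmult_le_compat_r|]; lra.
Qed.

Lemma wallis_const t : 1 / 2 < t -> wallis t = PI / 2.
Proof.
  intros Ht. destruct (nfloor_ex (2 * t) ltac:(lra)) as [q Hq].
  apply Rminus_diag_uniq, (eq0_of_linear_bound _ (INR q - 1) (PI / 2) 2). intros m Hm.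
  assert (Hm2 : 2 <= INR m) by (apply le_INR in Hm; exact Hm).
  rewrite <- (wallis_shift_nat t m Ht).
  replace (INR q - 1 + INR m) with (INR (q + m) - 1) by (rewrite plus_INR; ring).
  apply wallis_near_half_nat; [lia|]. rewrite plus_INR. lra.
Qed.

Lemma wallis_squeeze Q u t H Hm Hp : 1 < t -> 0 < Hp -> Q = u * H ->
  u ^ 2 <= t - 1 / 2 -> (t - 1 / 2) ^ 2 <= t * u ^ 2 -> Hp <= H <= Hm ->
  2 * (t - 1) * Hm * H = PI / 2 -> (2 * t - 1) * H * Hp = PI / 2 ->
  Rabs (Q ^ 2 - PI / 4) * (t - 1) <= PI / 8.
Proof.
  intros Ht HHp -> Hu1 Hu2 [HpH HHm] Em Ep.
  assert (Up : (u * H) ^ 2 <= (t - 1 / 2) * (H * Hm)).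
  { replace ((u * H) ^ 2) with (u ^ 2 * (H * H)) by ring.
    apply Rmult_le_compat; [nra | nra | exact Hu1 | apply Rmult_le_compat_l; lra]. }
  assert (Lo : (t - 1 / 2) ^ 2 * (H * Hp) <= t * (u * H) ^ 2).
  { replace (t * (u * H) ^ 2) with ((t * u ^ 2) * (H * H)) by ring.
    apply Rmult_le_compat; [nra | nra | exact Hu2 | apply Rmult_le_compat_l; lra]. }
  assert (EHm : (t - 1) * (H * Hm) = PI / 4).
  { replace (PI / 4) with (PI / 2 / 2) by field. rewrite <- Em. field. }
  assert (EHp : (t - 1 / 2) * (H * Hp) = PI / 4).
  { replace (PI / 4) with (PI / 2 / 2) by field. rewrite <- Ep. field. }
  set (Q2 := (u * H) ^ 2) in *.
  assert (Q2t : t * (PI / 4 - Q2) <= PI / 8).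
  { replace ((t - 1 / 2) ^ 2 * (H * Hp)) with ((t - 1 / 2) * (PI / 4)) in Lo
      by (rewrite <- EHp; ring).
    lra. }
  assert (Q2t' : (t - 1) * Q2 <= (t - 1 / 2) * (PI / 4)).
  { rewrite <- EHm. replace ((t - 1 / 2) * ((t - 1) * (H * Hm))) with
      ((t - 1) * ((t - 1 / 2) * (H * Hm))) by ring.
    apply Rmult_le_compat_l; lra. }
  unfold Rabs. destruct Rcase_abs; nra.
Qed.

Lemma Gamma_shift_half_beta s c d n : 1 / 2 < s ->
  Gamma_shift s c n * half_beta (s + INR n) * d = c * half_beta s * Gamma_shift (s - 1 / 2) d n.
Proof.
  intros Hs. induction n as [|n IH]; simpl Gamma_shift.
  - rewrite Rplus_0_r. ring.
  - pose proof (pos_INR n). rewrite S_INR, <- Rplus_assoc, half_beta_succ by lra.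
    transitivity ((s + INR n - 1 / 2) * (c * half_beta s * Gamma_shift (s - 1 / 2) d n));
      [rewrite <- IH; field; lra | ring].
Qed.

Lemma Gamma_ratio_half_bounds t g h : 1 / 2 < t -> Gamma_lim t g -> Gamma_lim (t - 1 / 2) h ->
  (g / h) ^ 2 <= t - 1 / 2 /\ (t - 1 / 2) ^ 2 <= t * (g / h) ^ 2.
Proof.
  intros Ht Gg Gh.
  assert (Hg : 0 < g) by exact (Gamma_lim_pos _ _ Gg).
  assert (Hh : 0 < h) by exact (Gamma_lim_pos _ _ Gh).
  assert (Gh1 : Gamma_lim (t + 1 / 2) ((t - 1 / 2) * h)).
  { replace (t + 1 / 2) with (t - 1 / 2 + 1) by field. apply Gamma_lim_succ; [lra | exact Gh]. }
  assert (Gg1 : Gamma_lim (t + 1) (t * g)) by (apply Gamma_lim_succ; [lra | exact Gg]).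
  assert (L1 : g ^ 2 <= h * ((t - 1 / 2) * h)).
  { apply (Gamma_lim_midpoint (t - 1 / 2) (t + 1 / 2)); [exact Gh | exact Gh1 |].
    replace ((t - 1 / 2 + (t + 1 / 2)) / 2) with t by field. exact Gg. }
  assert (L2 : ((t - 1 / 2) * h) ^ 2 <= g * (t * g)).
  { apply (Gamma_lim_midpoint t (t + 1)); [exact Gg | exact Gg1 |].
    replace ((t + (t + 1)) / 2) with (t + 1 / 2) by field. exact Gh1. }
  replace ((g / h) ^ 2) with (g ^ 2 / h ^ 2) by (field; lra).
  split; apply Rmult_le_reg_r with (h ^ 2); try nra.
  - replace (g ^ 2 / h ^ 2 * h ^ 2) with (g ^ 2) by (field; lra). nra.
  - replace (t * (g ^ 2 / h ^ 2) * h ^ 2) with (t * g ^ 2) by (field; lra). nra.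
Qed.

(* [Q = Gamma(s) half_beta(s) / Gamma(s - 1/2)] is invariant under [s -> s + 1], and at
   [t = s + n] log-convexity of [Gamma] and the Wallis identity pin [Q^2] to within [O(1/t)]
   of [PI/4]. *)
Lemma Gamma_half_beta_sq_bound s c d n : 1 / 2 < s -> Gamma_lim s c -> Gamma_lim (s - 1 / 2) d ->
  (1 <= n)%nat -> Rabs ((c * half_beta s / d) ^ 2 - PI / 4) * (s - 1 + INR n) <= PI / 8.
Proof.
  intros Hs Gc Gd Hn.
  assert (Hn1 : 1 <= INR n) by (apply le_INR in Hn; exact Hn).
  set (t := s + INR n). replace (s - 1 + INR n) with (t - 1) by (unfold t; ring).
  set (g := Gamma_shift s c n). set (h := Gamma_shift (s - 1 / 2) d n).
  assert (Gg : Gamma_lim t g) by (apply Gamma_lim_shift; auto; lra).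
  assert (Gh : Gamma_lim (t - 1 / 2) h).
  { replace (t - 1 / 2) with (s - 1 / 2 + INR n) by (unfold t; ring).
    apply Gamma_lim_shift; auto; lra. }
  assert (Hd : 0 < d) by exact (Gamma_lim_pos _ _ Gd).
  assert (Hh : 0 < h) by exact (Gamma_lim_pos _ _ Gh).
  destruct (Gamma_ratio_half_bounds t g h ltac:(unfold t; lra) Gg Gh) as [B1 B2].
  apply (wallis_squeeze _ (g / h) t (half_beta t) (half_beta (t - 1 / 2)) (half_beta (t + 1 / 2))).
  - unfold t; lra.
  - apply half_beta_pos. unfold t; lra.
  - assert (E := Gamma_shift_half_beta s c d n Hs). fold g h t in E.
    apply (Rmult_eq_reg_r (d * h)); [|nra].
    replace (c * half_beta s / d * (d * h)) with (c * half_beta s * h) by (field; lra).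
    rewrite <- E. field. lra.
  - exact B1.
  - exact B2.
  - split; apply half_beta_antitone; unfold t; lra.
  - rewrite <- (wallis_const (t - 1 / 2)) by (unfold t; lra). unfold wallis.
    replace (t - 1 / 2 + 1 / 2) with t by ring.
    replace (2 * (t - 1 / 2) - 1) with (2 * (t - 1)) by field. reflexivity.
  - apply wallis_const. unfold t; lra.
Qed.

Lemma Gamma_half_beta s c d : 1 / 2 < s -> Gamma_lim s c -> Gamma_lim (s - 1 / 2) d ->
  2 * c * half_beta s = sqrt PI * d.
Proof.
  intros Hs Gc Gd.
  assert (Hd : 0 < d) by exact (Gamma_lim_pos _ _ Gd).
  set (Q := c * half_beta s / d).
  assert (HQ : 0 < Q).
  { apply Rdiv_lt_0_compat; [apply Rmult_lt_0_compat|]; auto.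
    - exact (Gamma_lim_pos _ _ Gc).
    - apply half_beta_pos, Hs. }
  assert (Q2 : Q ^ 2 = PI / 4).
  { apply Rminus_diag_uniq, (eq0_of_linear_bound _ (s - 1) (PI / 8) 1).
    intros n Hn. exact (Gamma_half_beta_sq_bound s c d n Hs Gc Gd Hn). }
  assert (HPI : 0 < PI) by apply PI_RGT_0.
  assert (Es : sqrt PI * sqrt PI = PI) by (apply sqrt_sqrt; lra).
  assert (Hsq : 0 < sqrt PI) by (apply sqrt_lt_R0; lra).
  assert (EQ : Q = sqrt PI / 2) by nra.
  unfold Q in EQ. apply (Rmult_eq_reg_r (/ d)); [|apply Rinv_neq_0_compat; lra].
  replace (2 * c * half_beta s * / d) with (2 * (c * half_beta s / d)) by (field; lra).
  rewrite EQ. field. lra.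
Qed.

(** * Distribution functions *)

Section Distribution_function.

Variables (f F : R -> R).
Hypothesis f_cont : forall x, continuity_pt f x.
Hypothesis F_cdf : is_cdf_of f F.

Lemma is_lim_seq_cdf x : is_lim_seq (fun n => RInt f (- INR n) x) (F x).
Proof.
  apply is_lim_seq_spec. intros eps.
  destruct (F_cdf x eps (cond_pos eps)) as [M HM].
  destruct (INR_eventually_gt (- M)) as [N HN]. exists N. intros n Hn.
  destruct (HM (- INR n) ltac:(specialize (HN n Hn); lra)) as [w [Hw Hwe]].
  now rewrite (RInt_of_RInt_eq _ _ _ _ Hw).
Qed.

Lemma cdf_add_RInt x y : F y = F x + RInt f x y.
Proof.
  assert (H : is_lim_seq (fun n => RInt f (- INR n) x + RInt f x y) (F x + RInt f x y))
    by (apply is_lim_seq_plus'; [apply is_lim_seq_cdf | apply is_lim_seq_const]).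
  apply is_lim_seq_ext with (v := fun n => RInt f (- INR n) y) in H.
  - apply is_lim_seq_unique in H. rewrite (is_lim_seq_unique _ _ (is_lim_seq_cdf y)) in H.
    now injection H.
  - intros n. symmetry. apply RInt_split; apply ex_RInt_continuity, f_cont.
Qed.

Lemma is_derive_cdf x : is_derive F x (f x).
Proof.
  apply is_derive_ext with (f := fun y => F 0 + RInt f 0 y).
  { intros t. symmetry. apply cdf_add_RInt. }
  assert (H : is_derive (fun y => RInt f 0 y) x (f x)).
  { apply (is_derive_RInt (V := R_CompleteNormedModule) f (fun y => RInt f 0 y) 0).
    - apply filter_forall. intros b. apply (RInt_correct (V := R_CompleteNormedModule)).
      apply ex_RInt_continuity, f_cont.
    - apply continuity_pt_filterlim, f_cont. }
  assert (H2 := is_derive_plus _ _ x _ _ (is_derive_const (F 0) x) H).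
  now rewrite plus_zero_l in H2.
Qed.

End Distribution_function.

(** * The Student t distribution *)

Section Student.

Variables (r c d : R) (F : R -> R).
Hypothesis r_pos : 0 < r.
Hypothesis Gamma_c : is_Gamma ((r + 1) / 2) c.
Hypothesis Gamma_d : is_Gamma (r / 2) d.
Hypothesis F_cdf : is_cdf_of (student_density r c d) F.

Local Notation f := (student_density r c d).
Local Notation K := (c / (sqrt (PI * r) * d)).

Definition student_deriv (x : R) : R := - (r + 1) * x * f x / (r + x ^ 2).

Lemma student_const_pos : 0 < K.
Proof.
  assert (0 < c) by exact (Gamma_lim_pos _ _ (is_Gamma_lim _ _ Gamma_c)).
  assert (0 < d) by exact (Gamma_lim_pos _ _ (is_Gamma_lim _ _ Gamma_d)).
  assert (0 < sqrt (PI * r)) by (apply sqrt_lt_R0; pose proof PI_RGT_0; nra).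
  apply Rdiv_lt_0_compat; auto. nra.
Qed.

Lemma student_density_pos x : 0 < f x.
Proof. apply Rmult_lt_0_compat; [apply student_const_pos | apply exp_pos]. Qed.

Lemma student_density_beta x : f x = K * beta_kernel ((r + 1) / 2) (x / sqrt r).
Proof.
  unfold student_density, beta_kernel, Rdiv. do 3 f_equal.
  rewrite Rpow_mult_distr, pow_inv, pow2_sqrt by lra. reflexivity.
Qed.

Lemma is_derive_student_density x : is_derive f x (student_deriv x).
Proof.
  assert (0 <= x ^ 2) by apply pow2_ge_0.
  assert (0 < 1 + x ^ 2 / r) by (assert (0 <= x ^ 2 / r) by (apply Rdiv_le_0_compat; lra); lra).
  unfold student_deriv, student_density, Rpower. auto_derive; [lra|].
  replace (1 + x * (x * 1) * / r) with (1 + x ^ 2 / r) by (unfold Rdiv; simpl; ring).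
  set (k := c / (sqrt (PI * r) * d)).
  field. split; [nra | lra].
Qed.

Lemma student_density_continuity_pt x : continuity_pt f x.
Proof. exact (is_derive_continuity_pt _ _ _ (is_derive_student_density x)). Qed.

Lemma student_density_opp x : f (- x) = f x.
Proof. unfold student_density. now replace ((- x) ^ 2) with (x ^ 2) by ring. Qed.

Lemma student_deriv_opp x : student_deriv (- x) = - student_deriv x.
Proof.
  unfold student_deriv. rewrite student_density_opp.
  replace ((- x) ^ 2) with (x ^ 2) by ring. unfold Rdiv. ring.
Qed.

Lemma student_deriv_nonneg x : x <= 0 -> 0 <= student_deriv x.
Proof.
  intros Hx. pose proof (student_density_pos x). pose proof (pow2_ge_0 x).
  unfold student_deriv. apply Rdiv_le_0_compat; [|lra].
  replace (- (r + 1) * x * f x) with ((r + 1) * (- x) * f x) by ring.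
  apply Rmult_le_pos; [apply Rmult_le_pos|]; lra.
Qed.

Lemma RInt_student_density b :
  RInt f 0 b = K * sqrt r * RInt (beta_kernel ((r + 1) / 2)) 0 (b / sqrt r).
Proof.
  assert (Hs : 0 < sqrt r) by (apply sqrt_lt_R0; auto).
  set (s := (r + 1) / 2).
  assert (H := RInt_comp_lin (V := R_CompleteNormedModule) (beta_kernel s) (/ sqrt r) 0 0 b).
  replace (/ sqrt r * 0 + 0) with 0 in H by ring.
  replace (/ sqrt r * b + 0) with (b / sqrt r) in H by (unfold Rdiv; ring).
  rewrite <- H by apply ex_RInt_beta_kernel.
  rewrite <- RInt_scal_l.
  - apply (RInt_ext (V := R_CompleteNormedModule)). intros x _. rewrite student_density_beta.
    unfold scal; simpl; unfold mult; simpl.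
    replace (/ sqrt r * x + 0) with (x / sqrt r) by (unfold Rdiv; ring).
    unfold s. set (k := c / (sqrt (PI * r) * d)). field. lra.
  - apply ex_RInt_continuity. intros x. apply continuity_pt_scal.
    apply (continuity_pt_comp (fun y => / sqrt r * y + 0) (beta_kernel s));
      [|apply beta_kernel_continuity_pt].
    apply continuity_pt_plus; [apply continuity_pt_scal, continuity_pt_id |].
    apply continuity_pt_const.
    intros ? ?; reflexivity.
Qed.

Lemma student_density_half_mass :
  is_lim (fun b => RInt f 0 b) p_infty (1 / 2).
Proof.
  set (s := (r + 1) / 2).
  assert (Hsr : 0 < sqrt r) by (apply sqrt_lt_R0, r_pos).
  assert (Gd : Gamma_lim (s - 1 / 2) d).
  { replace (s - 1 / 2) with (r / 2) by (unfold s; field). apply is_Gamma_lim, Gamma_d. }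
  assert (N := Gamma_half_beta s c d ltac:(unfold s; lra) (is_Gamma_lim _ _ Gamma_c) Gd).
  assert (Hd : 0 < d) by exact (Gamma_lim_pos _ _ (is_Gamma_lim _ _ Gamma_d)).
  assert (HPI : 0 < sqrt PI) by (apply sqrt_lt_R0, PI_RGT_0).
  replace (Finite (1 / 2)) with (Finite (K * sqrt r * half_beta s)).
  2:{ f_equal. rewrite sqrt_mult by (pose proof PI_RGT_0; lra).
      replace (c / (sqrt PI * sqrt r * d) * sqrt r * half_beta s)
        with ((2 * c * half_beta s) / (2 * sqrt PI * d)) by (field; lra).
      rewrite N. field. lra. }
  apply is_lim_ext with (f := fun b => K * sqrt r * RInt (beta_kernel s) 0 (b / sqrt r)).
  { intros b. symmetry. apply RInt_student_density. }
  apply (is_lim_scal_l _ _ _ (half_beta s)).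
  apply (is_lim_comp (fun b => RInt (beta_kernel s) 0 b) (fun b => b / sqrt r) p_infty (half_beta s)
           p_infty).
  - apply is_lim_half_beta. unfold s; lra.
  - replace p_infty with (Rbar_mult p_infty (/ sqrt r)) at 2.
    + apply (is_lim_scal_r (fun b => b) (/ sqrt r) p_infty p_infty), is_lim_id.
    + simpl. destruct Rle_dec as [H|H]; [|exfalso; apply H, Rlt_le, Rinv_0_lt_compat, Hsr].
      destruct Rle_lt_or_eq_dec as [H'|H']; [reflexivity|].
      exfalso. apply (Rinv_neq_0_compat (sqrt r)); [lra | now symmetry].
  - exists 0. intros; discriminate.
Qed.

Lemma student_cdf_0 : F 0 = 1 / 2.
Proof.
  assert (H := is_lim_seq_cdf _ _ F_cdf 0).
  apply is_lim_seq_ext with (v := fun n => RInt f 0 (INR n)) in H.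
  - assert (H' := is_lim_comp_seq _ _ _ _ student_density_half_mass
                    ltac:(exists 0%nat; intros; discriminate) is_lim_seq_INR).
    apply is_lim_seq_unique in H. rewrite (is_lim_seq_unique _ _ H') in H. now injection H.
  - intros n. rewrite <- (opp_RInt_swap (V := R_CompleteNormedModule))
      by apply ex_RInt_continuity, student_density_continuity_pt.
    rewrite RInt_even; [apply Ropp_involutive | apply student_density_continuity_pt |
                        apply student_density_opp].
Qed.

Lemma student_cdf_opp x : F (- x) = 1 - F x.
Proof.
  rewrite (cdf_add_RInt _ _ student_density_continuity_pt F_cdf 0 x),
          (cdf_add_RInt _ _ student_density_continuity_pt F_cdf 0 (- x)), RInt_even, student_cdf_0;
    [lra | apply student_density_continuity_pt | apply student_density_opp].
Qed.

Lemma student_cdf_nondecr x y : x <= y -> F x <= F y.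
Proof.
  intros Hxy. rewrite (cdf_add_RInt _ _ student_density_continuity_pt F_cdf x y).
  assert (0 <= RInt f x y); [|lra].
  apply RInt_ge_0; [lra | apply ex_RInt_continuity, student_density_continuity_pt |].
  intros; apply Rlt_le, student_density_pos.
Qed.

(* A Mills-ratio type majorant of the lower tail: [mills' = f (1 + 1/x^2) >= f] on [x < 0]. *)
Definition mills (x : R) : R := f x * (1 + x ^ 2 / r) / (- x).

Lemma one_plus_sq_div_pos x : 0 < 1 + x ^ 2 / r.
Proof. assert (0 <= x ^ 2 / r) by (apply Rdiv_le_0_compat; [apply pow2_ge_0 | lra]). lra. Qed.

Lemma mills_pos x : x < 0 -> 0 < mills x.
Proof.
  intros Hx. apply Rdiv_lt_0_compat; [|lra].
  apply Rmult_lt_0_compat; [apply student_density_pos | apply one_plus_sq_div_pos].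
Qed.

Lemma mills_student_deriv x : x < 0 -> mills x * student_deriv x = (1 + 1 / r) * f x ^ 2.
Proof.
  intros Hx. unfold mills, student_deriv. pose proof (pow2_ge_0 x).
  field. lra.
Qed.

Lemma is_derive_mills x : x < 0 -> is_derive mills x (f x * (1 + / x ^ 2)).
Proof.
  intros Hx. pose proof (one_plus_sq_div_pos x).
  unfold mills, student_density, Rpower. auto_derive.
  - unfold Rdiv in *. simpl in *. repeat split; lra.
  - replace (1 + x * (x * 1) * / r) with (1 + x ^ 2 / r) by (unfold Rdiv; simpl; ring).
    set (k := c / (sqrt (PI * r) * d)).
    assert (0 < x ^ 2) by nra.
    field. repeat split; lra.
Qed.

Lemma continuity_pt_mills_deriv x : x < 0 -> continuity_pt (fun t => f t * (1 + / t ^ 2)) x.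
Proof.
  intros Hx. apply continuity_pt_mult; [apply student_density_continuity_pt|].
  apply ex_derive_continuity_pt. auto_derive. nra.
Qed.

Lemma RInt_mills_deriv a x : a <= x < 0 ->
  RInt (fun t => f t * (1 + / t ^ 2)) a x = mills x - mills a.
Proof.
  intros Hax. apply RInt_is_derive; [lra | |]; intros.
  - apply is_derive_mills. lra.
  - apply continuity_pt_mills_deriv. lra.
Qed.

(* On [x > 0], [1 + x^2/r = x^2 (1/r + 1/x^2)] exhibits the decay [mills (- x) ~ x^(-r)]. *)
Lemma mills_opp x : 0 < x ->
  mills (- x) = K * Rpower (/ r + / x ^ 2) ((1 - r) / 2) * Rpower x (- r).
Proof.
  intros Hx. unfold mills. rewrite student_density_opp. unfold student_density, Rpower.
  assert (Hy : 0 < / r + / x ^ 2).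
  { assert (0 < / x ^ 2) by (apply Rinv_0_lt_compat; nra).
    assert (0 < / r) by (apply Rinv_0_lt_compat; lra). lra. }
  rewrite Ropp_involutive.
  set (A := ln x). set (B := ln (/ r + / x ^ 2)).
  assert (E : 1 + x ^ 2 / r = exp (2 * A + B)).
  { replace (2 * A + B) with (A + A + B) by ring.
    rewrite !exp_plus. unfold A, B. rewrite !exp_ln by lra. field. lra. }
  assert (Ex : x = exp A) by (unfold A; rewrite exp_ln; lra).
  replace ((- x) ^ 2) with (x ^ 2) by ring.
  rewrite E, ln_exp. rewrite Ex at 1. unfold Rdiv. rewrite <- exp_Ropp, !Rmult_assoc, <- !exp_plus.
  do 3 f_equal. field.
Qed.

Lemma is_lim_mills_opp : is_lim (fun x => mills (- x)) p_infty 0.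
Proof.
  set (e := (1 - r) / 2).
  apply (is_lim_ext_loc (fun x => (K * Rpower (/ r + / x ^ 2) e) * Rpower x (- r))).
  { exists 0. intros x Hx. symmetry. apply mills_opp, Hx. }
  replace (Finite 0) with (Rbar_mult (K * Rpower (/ r) e) 0) by (simpl; f_equal; ring).
  apply is_lim_mult; [| apply is_lim_Rpower_neg, r_pos | simpl; auto].
  apply (is_lim_scal_l _ K p_infty (Rpower (/ r) e)).
  apply (is_lim_comp_continuous (fun x => / r + / x ^ 2) (fun y => Rpower y e)).
  - replace (Finite (/ r)) with (Finite (/ r + 0)) by (f_equal; ring).
    apply is_lim_plus'; [apply is_lim_const|].
    apply (is_lim_le_le_loc (fun _ => 0) (fun x => / x));
      [| apply is_lim_const | apply is_lim_inv_p_infty].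
    exists 1. intros x Hx. split.
    + apply Rlt_le, Rinv_0_lt_compat. nra.
    + apply Rinv_le_contravar; nra.
  - apply continuity_pt_filterlim, ex_derive_continuity_pt. unfold Rpower. auto_derive.
    apply Rinv_0_lt_compat, r_pos.
Qed.

Lemma is_lim_seq_mills_opp : is_lim_seq (fun n => mills (- INR n)) 0.
Proof.
  apply (is_lim_comp_seq (fun x => mills (- x)) INR p_infty 0);
    [apply is_lim_mills_opp | exists 0%nat; intros; discriminate | apply is_lim_seq_INR].
Qed.

Lemma student_cdf_le_mills x : x < 0 -> F x <= mills x.
Proof.
  intros Hx.
  refine (is_lim_seq_le_loc _ _ _ _ _ (is_lim_seq_cdf _ _ F_cdf x) (is_lim_seq_const (mills x))).
  destruct (INR_eventually_gt (- x)) as [N HN]. exists N. intros n Hn. specialize (HN n Hn).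
  assert (0 < mills (- INR n)) by (apply mills_pos; lra).
  rewrite <- (Rminus_0_r (mills x)). apply Rle_trans with (mills x - mills (- INR n)); [|lra].
  rewrite <- RInt_mills_deriv by lra.
  apply RInt_le; [lra | apply ex_RInt_continuity, student_density_continuity_pt | |].
  - apply ex_RInt_continuity_pt; [lra|]. intros; apply continuity_pt_mills_deriv; lra.
  - intros t Ht. pose proof (student_density_pos t).
    assert (0 < / t ^ 2) by (apply Rinv_0_lt_compat; nra). nra.
Qed.

Lemma student_cdf_ge_mills x : x < 0 -> mills x * (x ^ 2 / (1 + x ^ 2)) <= F x.
Proof.
  intros Hx. set (q := x ^ 2 / (1 + x ^ 2)).
  assert (Hq : 0 < q) by (apply Rdiv_lt_0_compat; nra).
  assert (H : is_lim_seq (fun n => (mills x - mills (- INR n)) * q) ((mills x - 0) * q))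
    by (apply (is_lim_seq_scal_r _ q (mills x - 0)), is_lim_seq_minus';
        [apply is_lim_seq_const | apply is_lim_seq_mills_opp]).
  rewrite Rminus_0_r in H.
  refine (is_lim_seq_le_loc _ _ _ _ _ H (is_lim_seq_cdf _ _ F_cdf x)).
  destruct (INR_eventually_gt (- x)) as [N HN]. exists N. intros n Hn. specialize (HN n Hn).
  rewrite <- RInt_mills_deriv by lra. rewrite Rmult_comm, <- RInt_scal_l.
  - apply RInt_le; [lra | | apply ex_RInt_continuity, student_density_continuity_pt |].
    + apply ex_RInt_continuity_pt; [lra|]. intros.
      apply continuity_pt_scal, continuity_pt_mills_deriv; lra.
    + intros t Ht. pose proof (student_density_pos t).
      assert (Ht2 : x ^ 2 <= t ^ 2) by nra.
      assert (q * (1 + / t ^ 2) <= 1); [|nra].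
      unfold q. apply Rmult_le_reg_r with ((1 + x ^ 2) * t ^ 2); [nra|].
      replace (x ^ 2 / (1 + x ^ 2) * (1 + / t ^ 2) * ((1 + x ^ 2) * t ^ 2))
        with (x ^ 2 * (t ^ 2 + 1)) by (field; nra).
      nra.
  - apply ex_RInt_continuity_pt; [lra|]. intros; apply continuity_pt_mills_deriv; lra.
Qed.

Lemma student_cdf_pos x : 0 < F x.
Proof.
  assert (Hneg : forall x, x < 0 -> 0 < F x).
  { intros y Hy. eapply Rlt_le_trans; [|apply student_cdf_ge_mills, Hy].
    apply Rmult_lt_0_compat; [apply mills_pos, Hy | apply Rdiv_lt_0_compat; nra]. }
  destruct (Rlt_dec x 0) as [Hx|Hx]; [auto|].
  apply Rlt_le_trans with (F (-1)); [apply Hneg; lra | apply student_cdf_nondecr; lra].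
Qed.

Lemma student_cdf_lt_1 x : F x < 1.
Proof. pose proof (student_cdf_pos (- x)). rewrite student_cdf_opp in H. lra. Qed.

Lemma student_cdf_mul_deriv_le x : F x * student_deriv x <= (1 + 1 / r) * f x ^ 2.
Proof.
  assert (0 < 1 / r) by (apply Rdiv_lt_0_compat; lra).
  pose proof (student_cdf_pos x).
  destruct (Rlt_dec x 0) as [Hx|Hx].
  - rewrite <- mills_student_deriv by exact Hx.
    apply Rmult_le_compat_r; [apply student_deriv_nonneg; lra | apply student_cdf_le_mills, Hx].
  - assert (student_deriv x <= 0).
    { rewrite <- (Ropp_involutive x), student_deriv_opp.
      pose proof (student_deriv_nonneg (- x) ltac:(lra)). lra. }
    assert (0 <= f x ^ 2) by apply pow2_ge_0. nra.
Qed.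

Lemma student_cdf_Rpower_convex : convex_on_R (fun x => Rpower (F x) (- 1 / r)).
Proof.
  apply (convex_on_R_Rpower_neg F f student_deriv).
  - unfold Rdiv. assert (0 < / r) by (apply Rinv_0_lt_compat, r_pos). lra.
  - apply student_cdf_pos.
  - apply is_derive_cdf; [apply student_density_continuity_pt | exact F_cdf].
  - apply is_derive_student_density.
  - intros x. replace (1 - - 1 / r) with (1 + 1 / r) by (field; lra).
    apply student_cdf_mul_deriv_le.
Qed.

Lemma student_ccdf_Rpower_convex : convex_on_R (fun x => Rpower (1 - F x) (- 1 / r)).
Proof.
  apply (convex_on_R_ext (fun x => Rpower (F (- x)) (- 1 / r))).
  - intros x. now rewrite student_cdf_opp.
  - exact (convex_on_R_comp_opp _ student_cdf_Rpower_convex).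
Qed.

Definition gamma_ratio (x : R) : R := F x * (1 - F x) * Rabs (student_deriv x) / f x ^ 2.

Lemma gamma_ratio_opp x : gamma_ratio (- x) = gamma_ratio x.
Proof.
  unfold gamma_ratio. rewrite student_cdf_opp, student_deriv_opp, Rabs_Ropp, student_density_opp.
  f_equal. f_equal. ring.
Qed.

Lemma gamma_ratio_le x : gamma_ratio x <= 1 + 1 / r.
Proof.
  assert (Hneg : forall x, x <= 0 -> gamma_ratio x <= 1 + 1 / r).
  { intros y Hy. unfold gamma_ratio. rewrite Rabs_pos_eq by (apply student_deriv_nonneg, Hy).
    pose proof (student_density_pos y). pose proof (student_cdf_pos y).
    pose proof (student_cdf_lt_1 y). pose proof (student_deriv_nonneg y Hy).
    pose proof (student_cdf_mul_deriv_le y).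
    apply Rmult_le_reg_r with (f y ^ 2); [nra|].
    unfold Rdiv. rewrite Rmult_assoc, Rinv_l, Rmult_1_r by nra. nra. }
  destruct (Rle_dec x 0); [auto|]. rewrite <- gamma_ratio_opp. apply Hneg. lra.
Qed.

Lemma gamma_ratio_ge x : x < 0 ->
  (1 + 1 / r) * (x ^ 2 / (1 + x ^ 2)) * (1 - mills x) <= gamma_ratio x.
Proof.
  intros Hx. unfold gamma_ratio. rewrite Rabs_pos_eq by (apply student_deriv_nonneg; lra).
  pose proof (student_density_pos x).
  pose proof (student_cdf_pos x). pose proof (student_cdf_lt_1 x).
  pose proof (mills_pos x Hx). pose proof (student_cdf_le_mills x Hx).
  pose proof (student_cdf_ge_mills x Hx).
  set (q := x ^ 2 / (1 + x ^ 2)) in *.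
  assert (Hq : 0 < q) by (apply Rdiv_lt_0_compat; nra).
  assert (Hr1 : 0 < 1 + 1 / r) by (assert (0 < 1 / r) by (apply Rdiv_lt_0_compat; lra); lra).
  assert (ED : student_deriv x = (1 + 1 / r) * f x ^ 2 / mills x)
    by (rewrite <- mills_student_deriv by exact Hx; field; lra).
  rewrite ED.
  replace (F x * (1 - F x) * ((1 + 1 / r) * f x ^ 2 / mills x) / f x ^ 2)
    with ((1 + 1 / r) * (F x / mills x * (1 - F x))) by (field; lra).
  rewrite Rmult_assoc. apply Rmult_le_compat_l; [lra|].
  assert (q <= F x / mills x).
  { apply Rmult_le_reg_r with (mills x); [lra|].
    unfold Rdiv. rewrite Rmult_assoc, Rinv_l, Rmult_1_r; lra. }
  destruct (Rle_dec 0 (1 - mills x)).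
  - apply Rmult_le_compat; lra.
  - assert (0 <= F x / mills x * (1 - F x)) by (apply Rmult_le_pos; [apply Rdiv_le_0_compat|]; lra).
    nra.
Qed.

Lemma is_lub_gamma_ratio : is_lub (fun y => exists x, y = gamma_ratio x) (1 + 1 / r).
Proof.
  split; [intros y [x ->]; apply gamma_ratio_le|].
  intros B HB.
  set (xs := fun n => - INR (S n)).
  assert (Hx : forall n, xs n < 0)
    by (intros; unfold xs; pose proof (lt_0_INR (S n) (Nat.lt_0_succ n)); lra).
  assert (Hw : is_lim_seq (fun n => (1 + 1 / r) * (xs n ^ 2 / (1 + xs n ^ 2)) * (1 - mills (xs n)))
                 ((1 + 1 / r) * 1 * (1 - 0))).
  { apply is_lim_seq_mult'; [apply is_lim_seq_mult'; [apply is_lim_seq_const|] |].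
    - apply is_lim_seq_ext with (u := fun n => 1 - / (1 + INR (S n) ^ 2)).
      { intros n. unfold xs. pose proof (pos_INR (S n)). field. nra. }
      replace (Finite 1) with (Finite (1 - 0)) by (f_equal; ring).
      apply is_lim_seq_minus'; [apply is_lim_seq_const|].
      apply (is_lim_comp_seq (fun y => / (1 + y ^ 2)) (fun n => INR (S n)) p_infty 0).
      + apply (is_lim_le_le_loc (fun _ => 0) (fun y => / y));
          [| apply is_lim_const | apply is_lim_inv_p_infty].
        exists 1. intros y Hy.
        split; [apply Rlt_le, Rinv_0_lt_compat | apply Rinv_le_contravar]; nra.
      + exists 0%nat; intros; discriminate.
      + apply (is_lim_seq_incr_1 INR), is_lim_seq_INR.
    - apply is_lim_seq_minus'; [apply is_lim_seq_const|].
      apply (is_lim_seq_incr_1 (fun n => mills (- INR n))), is_lim_seq_mills_opp. }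
  replace ((1 + 1 / r) * 1 * (1 - 0)) with (1 + 1 / r) in Hw by ring.
  exact (is_lim_seq_le _ (fun _ => B) _ B
           (fun n => Rle_trans _ _ _ (gamma_ratio_ge _ (Hx n)) (HB _ (ex_intro _ _ eq_refl)))
           Hw (is_lim_seq_const B)).
Qed.

End Student.

Theorem mainTheorem5 :
  forall (r c d : R) (F df : R -> R),
    0 < r ->
    is_Gamma ((r + 1) / 2) c ->
    is_Gamma (r / 2) d ->
    is_cdf_of (student_density r c d) F ->
    (forall x, derivable_pt_lim (student_density r c d) x (df x)) ->
    bi_s_concave (- 1 / (1 + r)) F /\
    (convex_on_R (fun x => Rpower (F x) (- 1 / r)) /\
     convex_on_R (fun x => Rpower (1 - F x) (- 1 / r))) /\
    is_lub (gamma_set F (student_density r c d) df) (1 + 1 / r).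
Proof.
  intros r c d F df Hr Hc Hd HF Hdf.
  assert (C1 := student_cdf_Rpower_convex r c d F Hr Hc Hd HF).
  assert (C2 := student_ccdf_Rpower_convex r c d F Hr Hc Hd HF).
  assert (Edf : forall x, df x = student_deriv r c d x).
  { intros x. apply (uniqueness_limite (student_density r c d) x); [apply Hdf|].
    apply is_derive_Reals, is_derive_student_density, Hr. }
  split; [|split; [split; assumption|]].
  - unfold bi_s_concave. cbv zeta.
    replace (-1 / (1 + r) / (1 + -1 / (1 + r))) with (- 1 / r) by (field; lra).
    split; assumption.
  - apply (is_lub_iff (fun y => exists x, y = gamma_ratio r c d F x)).
    + intros y. unfold gamma_set, gamma_ratio.
      split; intros [x Hx]; exists x; now rewrite Edf in *.
    + apply is_lub_gamma_ratio; assumption.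
Qed.
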